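(* Let $A$ be a commutative unital C*-algebra, let $f\colon L_A\to\mathcal{O}(\Sigma(A))$ be the canonical map, and define a relation $\lhd\subseteq L_A\times\mathcal{P}(L_A)$ by $x\lhd U$ iff $f(x)\le\bigvee f(U)$. (a) $\lhd$ is a covering relation and $\mathcal{O}(\Sigma(A))\cong\mathcal{F}(L_A,\lhd)$, the isomorphism sending $\mathcal{D}_a$ to the image of ${\downarrow}\mathtt{D}_a$. (b) For $a\in A_{\mathrm{sa}}$ and $U\subseteq L_A$: $\mathtt{D}_a\lhd U$ holds iff for every rational $q>0$ there is a (Kuratowski) finite $U_0\subseteq U$ with $\mathtt{D}_{a-q}\le\bigvee U_0$.
   Context: All C*-algebras are unital, $A_{\mathrm{sa}}$ denotes self-adjoint elements, $a-q$ means $a-q\cdot1$. $L_A$ is the distributive lattice freely generated by symbols $\mathtt{D}_a$ ($a\in A_{\mathrm{sa}}$) subject to $\mathtt{D}_1=1$, $\mathtt{D}_a\wedge\mathtt{D}_{-a}=0$, $\mathtt{D}_{-b^2}=0$, $\mathtt{D}_{a+b}\le\mathtt{D}_a\vee\mathtt{D}_b$, $\mathtt{D}_{ab}=(\mathtt{D}_a\wedge\mathtt{D}_b)\vee(\mathtt{D}_{-a}\wedge\mathtt{D}_{-b})$. $\mathcal{O}(\Sigma(A))$ is the frame generated by symbols $\mathcal{D}_a$ subject to the same relations plus $\mathcal{D}_a\le\bigvee_{r\in\mathbb{Q}^+}\mathcal{D}_{a-r}$, and $f(\mathtt{D}_a)=\mathcal{D}_a$. A covering relation on a meet-semilattice $L$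 is a relation $\lhd\subseteq L\times\mathcal{P}(L)$ with: (i) $x\in U\Rightarrow x\lhd U$; (ii) $x\lhd U$ and $y\lhd V$ for all $y\in U$ imply $x\lhd V$; (iii) $x\lhd U\Rightarrow x\wedge y\lhd U$; (iv) $x\lhd U$ and $x\lhd V$ imply $x\lhd U\wedge V$, where $U\wedge V=\{u\wedge v\mid u\in U,v\in V\}$. $\mathcal{F}(L,\lhd)=\{U\subseteq L\mid U\text{ down-closed},\ \forall x\,(x\lhd U\Rightarrow x\in U)\}$, ordered by inclusion; it is a frame. Reasoning is constructive. *)

From Stdlib Require Import Reals QArith List.
Open Scope R_scope.

Record Cx := mkCx { Cre : R; Cim : R }.
Definition Cadd (z w : Cx) : Cx := mkCx (Cre z + Cre w) (Cim z + Cim w).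
Definition Cmul (z w : Cx) : Cx :=
  mkCx (Cre z * Cre w - Cim z * Cim w) (Cre z * Cim w + Cim z * Cre w).
Definition Cconj (z : Cx) : Cx := mkCx (Cre z) (- Cim z).
Definition Cabs (z : Cx) : R := sqrt (Cre z * Cre z + Cim z * Cim z).
Definition C1 : Cx := mkCx 1 0.
Definition RtoC (r : R) : Cx := mkCx r 0.

Lemma Cconj_RtoC (r : R) : Cconj (RtoC r) = RtoC r.
Proof. unfold Cconj, RtoC; simpl. now rewrite Ropp_0. Qed.

Record CommCStarAlg := {
  car :> Type;
  zero : car; one : car;
  add : car -> car -> car; opp : car -> car; mul : car -> car -> car;
  smul : Cx -> car -> car; star : car -> car; norm : car -> R;
  add_assoc : forall x y z, add x (add y z) = add (add x y) z;
  add_comm : forall x y, add x y = add y x;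
  add_0l : forall x, add zero x = x;
  add_oppr : forall x, add x (opp x) = zero;
  smul_assoc : forall c d x, smul c (smul d x) = smul (Cmul c d) x;
  smul_1 : forall x, smul C1 x = x;
  smul_addr : forall c x y, smul c (add x y) = add (smul c x) (smul c y);
  smul_addl : forall c d x, smul (Cadd c d) x = add (smul c x) (smul d x);
  mul_assoc : forall x y z, mul x (mul y z) = mul (mul x y) z;
  mul_comm : forall x y, mul x y = mul y x;
  mul_1l : forall x, mul one x = x;
  mul_addl : forall x y z, mul (add x y) z = add (mul x z) (mul y z);
  mul_smull : forall c x y, mul (smul c x) y = smul c (mul x y);
  star_star : forall x, star (star x) = x;
  star_add : forall x y, star (add x y) = add (star x) (star y);
  star_smul : forall c x, star (smul c x) = smul (Cconj c) (star x);
  star_mul : forall x y, star (mul x y) = mul (star y) (star x);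
  norm_eq0 : forall x, norm x = 0 -> x = zero;
  norm_triangle : forall x y, norm (add x y) <= norm x + norm y;
  norm_smul : forall c x, norm (smul c x) = Cabs c * norm x;
  norm_submult : forall x y, norm (mul x y) <= norm x * norm y;
  norm_cstar : forall x, norm (mul (star x) x) = norm x * norm x;
  complete : forall u : nat -> car,
    (forall eps, 0 < eps -> exists N, forall n m, (N <= n)%nat -> (N <= m)%nat ->
        norm (add (u n) (opp (u m))) < eps) ->
    exists l, forall eps, 0 < eps -> exists N, forall n, (N <= n)%nat ->
        norm (add (u n) (opp l)) < eps
}.

Arguments zero {_}. Arguments one {_}. Arguments add {_}. Arguments opp {_}.
Arguments mul {_}. Arguments smul {_}. Arguments star {_}. Arguments norm {_}.

Section SA.
Variable A : CommCStarAlg.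

Lemma star_zero : star (@zero A) = zero.
Proof.
  assert (H : star (@zero A) = add (star zero) (star zero)).
  { rewrite <- star_add, add_0l. reflexivity. }
  assert (H2 := f_equal (fun t => add t (opp (star (@zero A)))) H). simpl in H2.
  rewrite add_oppr, <- add_assoc, add_oppr, add_comm, add_0l in H2.
  exact (eq_sym H2).
Qed.

Lemma star_opp (x : A) : star (opp x) = opp (star x).
Proof.
  assert (H : add (star x) (star (opp x)) = zero).
  { rewrite <- star_add, add_oppr. apply star_zero. }
  assert (H2 := f_equal (fun t => add (opp (star x)) t) H). simpl in H2.
  rewrite add_assoc, (add_comm _ (opp (star x))), add_oppr, add_0l in H2.
  rewrite H2, add_comm, add_0l. reflexivity.
Qed.

Lemma star_one : star (@one A) = one.
Proof.
  assert (H : star (@one A) = mul (star one) one).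
  { rewrite mul_comm, mul_1l. reflexivity. }
  assert (H2 := f_equal star H).
  rewrite star_star, star_mul, star_star, mul_comm, mul_1l in H2.
  exact (eq_sym H2).
Qed.

End SA.

Definition sa (A : CommCStarAlg) := { a : A | star a = a }.

Definition sa_one (A : CommCStarAlg) : sa A := exist _ one (star_one A).

Definition sa_add {A : CommCStarAlg} (a b : sa A) : sa A.
Proof.
  exists (add (proj1_sig a) (proj1_sig b)).
  rewrite star_add, (proj2_sig a), (proj2_sig b). reflexivity.
Defined.

Definition sa_opp {A : CommCStarAlg} (a : sa A) : sa A.
Proof.
  exists (opp (proj1_sig a)).
  rewrite star_opp, (proj2_sig a). reflexivity.
Defined.

Definition sa_mul {A : CommCStarAlg} (a b : sa A) : sa A.
Proof.
  exists (mul (proj1_sig a) (proj1_sig b)).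
  rewrite star_mul, (proj2_sig a), (proj2_sig b), mul_comm. reflexivity.
Defined.

Definition sa_rat (A : CommCStarAlg) (q : Q) : sa A.
Proof.
  exists (smul (RtoC (Q2R q)) one).
  rewrite star_smul, Cconj_RtoC, star_one. reflexivity.
Defined.

Definition sa_subq {A : CommCStarAlg} (a : sa A) (q : Q) : sa A :=
  sa_add a (sa_opp (sa_rat A q)).

Record DLattice := {
  lcar :> Type;
  le : lcar -> lcar -> Prop;
  meet : lcar -> lcar -> lcar; join : lcar -> lcar -> lcar;
  top : lcar; bot : lcar;
  le_refl : forall x, le x x;
  le_trans : forall x y z, le x y -> le y z -> le x z;
  le_antisym : forall x y, le x y -> le y x -> x = y;
  meet_glb : forall x y z, le z (meet x y) <-> (le z x /\ le z y);
  join_lub : forall x y z, le (join x y) z <-> (le x z /\ le y z);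
  top_max : forall x, le x top;
  bot_min : forall x, le bot x;
  meet_join_distr : forall x y z, meet x (join y z) = join (meet x y) (meet x z)
}.
Arguments le {_}. Arguments meet {_}. Arguments join {_}.
Arguments top {_}. Arguments bot {_}.

Record Frame := {
  fcar :> Type;
  fle : fcar -> fcar -> Prop;
  fmeet : fcar -> fcar -> fcar;
  fsup : (fcar -> Prop) -> fcar;
  ftop : fcar;
  fle_refl : forall x, fle x x;
  fle_trans : forall x y z, fle x y -> fle y z -> fle x z;
  fle_antisym : forall x y, fle x y -> fle y x -> x = y;
  fmeet_glb : forall x y z, fle z (fmeet x y) <-> (fle z x /\ fle z y);
  fsup_lub : forall (S : fcar -> Prop) z, fle (fsup S) z <-> (forall x, S x -> fle x z);
  ftop_max : forall x, fle x ftop;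
  frame_distr : forall x (S : fcar -> Prop),
      fmeet x (fsup S) = fsup (fun y => exists s, S s /\ y = fmeet x s)
}.
Arguments fle {_}. Arguments fmeet {_}. Arguments fsup {_}. Arguments ftop {_}.

Definition fjoin {F : Frame} (x y : F) : F := fsup (fun z => z = x \/ z = y).
Definition fbot {F : Frame} : F := fsup (fun _ => False).
Definition image {X Y : Type} (h : X -> Y) (U : X -> Prop) : Y -> Prop :=
  fun y => exists x, U x /\ y = h x.

Definition dlat_hom {L M : DLattice} (h : L -> M) : Prop :=
  (forall x y, h (meet x y) = meet (h x) (h y)) /\
  (forall x y, h (join x y) = join (h x) (h y)) /\
  h top = top /\ h bot = bot.

Definition frame_hom {F G : Frame} (h : F -> G) : Prop :=
  (forall x y, h (fmeet x y) = fmeet (h x) (h y)) /\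
  h ftop = ftop /\
  (forall S, h (fsup S) = fsup (image h S)).

Definition dlat_frame_hom {L : DLattice} {F : Frame} (h : L -> F) : Prop :=
  (forall x y, h (meet x y) = fmeet (h x) (h y)) /\
  (forall x y, h (join x y) = fjoin (h x) (h y)) /\
  h top = ftop /\ h bot = fbot.

Definition LA_relations {A : CommCStarAlg} (L : DLattice) (D : sa A -> L) : Prop :=
  D (sa_one A) = top /\
  (forall a, meet (D a) (D (sa_opp a)) = bot) /\
  (forall b, D (sa_opp (sa_mul b b)) = bot) /\
  (forall a b, le (D (sa_add a b)) (join (D a) (D b))) /\
  (forall a b, D (sa_mul a b) =
                 join (meet (D a) (D b)) (meet (D (sa_opp a)) (D (sa_opp b)))).

(* (L, D) is the distributive lattice freely generated by the D_a subject to
   the relations: universal property. *)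
Definition is_LA {A : CommCStarAlg} (L : DLattice) (D : sa A -> L) : Prop :=
  LA_relations L D /\
  forall (M : DLattice) (E : sa A -> M), LA_relations M E ->
    exists h : L -> M, dlat_hom h /\ (forall a, h (D a) = E a) /\
      forall h' : L -> M, dlat_hom h' -> (forall a, h' (D a) = E a) ->
        forall x, h' x = h x.

Definition OA_relations {A : CommCStarAlg} (O : Frame) (D : sa A -> O) : Prop :=
  D (sa_one A) = ftop /\
  (forall a, fmeet (D a) (D (sa_opp a)) = fbot) /\
  (forall b, D (sa_opp (sa_mul b b)) = fbot) /\
  (forall a b, fle (D (sa_add a b)) (fjoin (D a) (D b))) /\
  (forall a b, D (sa_mul a b) =
                 fjoin (fmeet (D a) (D b)) (fmeet (D (sa_opp a)) (D (sa_opp b)))) /\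
  (forall a, fle (D a) (fsup (fun y => exists r : Q, (0 < r)%Q /\ y = D (sa_subq a r)))).

(* (O, D) is the frame freely generated by the D_a subject to the relations. *)
Definition is_OA {A : CommCStarAlg} (O : Frame) (D : sa A -> O) : Prop :=
  OA_relations O D /\
  forall (G : Frame) (E : sa A -> G), OA_relations G E ->
    exists h : O -> G, frame_hom h /\ (forall a, h (D a) = E a) /\
      forall h' : O -> G, frame_hom h' -> (forall a, h' (D a) = E a) ->
        forall x, h' x = h x.

Definition meet_sets {L : DLattice} (U V : L -> Prop) : L -> Prop :=
  fun z => exists u v, U u /\ V v /\ z = meet u v.

Definition is_covering {L : DLattice} (cov : L -> (L -> Prop) -> Prop) : Prop :=
  (forall x (U : L -> Prop), U x -> cov x U) /\
  (forall x (U V : L -> Prop), cov x U -> (forall y, U y -> cov y V) -> cov x V) /\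
  (forall x y (U : L -> Prop), cov x U -> cov (meet x y) U) /\
  (forall x (U V : L -> Prop), cov x U -> cov x V -> cov x (meet_sets U V)).

Definition in_F {L : DLattice} (cov : L -> (L -> Prop) -> Prop) (U : L -> Prop) : Prop :=
  (forall x y, le y x -> U x -> U y) /\ (forall x, cov x U -> U x).

Definition F_image {L : DLattice} (cov : L -> (L -> Prop) -> Prop) (U : L -> Prop) : L -> Prop :=
  fun x => forall V, in_F cov V -> (forall y, U y -> V y) -> V x.

Definition downset {L : DLattice} (x : L) : L -> Prop := fun y => le y x.

Definition bigjoin {L : DLattice} (s : list L) : L := fold_right join bot s.

From Stdlib Require Import Reals QArith Qreals List Lra Lia Ring
  FunctionalExtensionality PropExtensionality ProofIrrelevance.
Open Scope R_scope.

(* Everything rests on a frame map [h : O -> Idl(L)] into the frame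
   of ideals of [L], obtained from the freeness of [O] applied to
       D_a  |->  E_a := { x | x <= D_(a-q) for some rational q > 0 }.
   That the [E_a] satisfy the relations of [O] is the analytic part: for the
   product relation one needs that every self-adjoint [c] is bounded, i.e.
   [D_(N-c) = 1] for large [N], which comes from square roots of [1 - x] for
   [||x|| <= 1/2], constructed as limits of a Picard iteration.  Conversely
   [I |-> \/ f(I)] is a frame map [Idl(L) -> O] sending [E_a] to [D_a], so it is
   a left inverse of [h] by freeness, and [h (f x)] lies below [x] by induction
   over [L].  The first fact makes every open a join of images of [f], which for
   any lattice map gives the isomorphism O ~ F(L, <|) of part (a); the second
   turns a cover [f D_a <= \/ f(U)] into the finite covers of part (b). *)

Section Algebra.
Variable A : CommCStarAlg.

Lemma alg_ring_theory :
  ring_theory (@zero A) one add mul (fun x y => add x (opp y)) opp eq.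
Proof.
  constructor; intros.
  - apply add_0l.
  - apply add_comm.
  - apply add_assoc.
  - apply mul_1l.
  - apply mul_comm.
  - apply mul_assoc.
  - apply mul_addl.
  - reflexivity.
  - apply add_oppr.
Qed.
Add Ring alg_ring : alg_ring_theory.

Definition rconst (t : R) : A := smul (RtoC t) one.

Lemma smul_rconst (t : R) (x : A) : smul (RtoC t) x = mul (rconst t) x.
Proof. unfold rconst. rewrite mul_smull, mul_1l. reflexivity. Qed.

Lemma rconst_add s t : rconst (s + t) = add (rconst s) (rconst t).
Proof.
  unfold rconst. rewrite <- smul_addl. f_equal.
  unfold Cadd, RtoC; simpl. f_equal; ring.
Qed.

Lemma rconst_mul s t : rconst (s * t) = mul (rconst s) (rconst t).
Proof.
  rewrite <- smul_rconst. unfold rconst. rewrite smul_assoc. f_equal.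
  unfold Cmul, RtoC; simpl. f_equal; ring.
Qed.

Lemma rconst_0 : rconst 0 = zero.
Proof.
  pose proof (rconst_add 0 0) as H. rewrite Rplus_0_l in H.
  transitivity (add (add (rconst 0) (rconst 0)) (opp (rconst 0))); [ring|rewrite <- H; ring].
Qed.

Lemma rconst_1 : rconst 1 = one.
Proof. apply smul_1. Qed.

Lemma rconst_opp t : rconst (- t) = opp (rconst t).
Proof.
  pose proof (rconst_add (- t) t) as H. rewrite Rplus_opp_l, rconst_0 in H.
  transitivity (add (add (rconst (- t)) (rconst t)) (opp (rconst t))); [ring|rewrite <- H; ring].
Qed.

Lemma rconst_sub s t : rconst (s - t) = add (rconst s) (opp (rconst t)).
Proof. unfold Rminus. rewrite rconst_add, rconst_opp. reflexivity. Qed.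

Lemma star_rconst t : star (rconst t) = rconst t.
Proof. unfold rconst. rewrite star_smul, Cconj_RtoC, star_one. reflexivity. Qed.

Lemma norm_rconst_mul t (x : A) : norm (mul (rconst t) x) = Rabs t * norm x.
Proof.
  rewrite <- smul_rconst, norm_smul. unfold Cabs, RtoC; simpl.
  rewrite Rmult_0_l, Rplus_0_r, <- sqrt_Rsqr_abs. reflexivity.
Qed.

Lemma norm_opp (x : A) : norm (opp x) = norm x.
Proof.
  replace (opp x) with (mul (rconst (- (1))) x) by (rewrite rconst_opp, rconst_1; ring).
  rewrite norm_rconst_mul, Rabs_Ropp, Rabs_R1. ring.
Qed.

Lemma norm_zero : norm (@zero A) = 0.
Proof.
  replace (@zero A) with (mul (rconst 0) zero) by (rewrite rconst_0; ring).
  rewrite norm_rconst_mul, Rabs_R0. ring.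
Qed.

Lemma norm_nonneg (x : A) : 0 <= norm x.
Proof.
  pose proof (norm_triangle _ x (opp x)) as H.
  rewrite add_oppr, norm_zero, norm_opp in H. lra.
Qed.

(* The C*-identity forces the involution to be isometric. *)
Lemma norm_star (x : A) : norm (star x) = norm x.
Proof.
  assert (Hle : forall y : A, norm y <= norm (star y)).
  { intros y. pose proof (norm_cstar _ y). pose proof (norm_submult _ (star y) y).
    pose proof (norm_nonneg y). pose proof (norm_nonneg (star y)).
    destruct (Req_dec (norm y) 0); nra. }
  apply Rle_antisym; [|apply Hle].
  rewrite <- (star_star _ x) at 2. apply Hle.
Qed.

Definition dist (x y : A) : R := norm (add x (opp y)).

Lemma dist_sym x y : dist x y = dist y x.
Proof. unfold dist. rewrite <- norm_opp. f_equal. ring. Qed.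

Lemma dist_triangle x y z : dist x z <= dist x y + dist y z.
Proof.
  unfold dist.
  replace (add x (opp z)) with (add (add x (opp y)) (add y (opp z))) by ring.
  apply norm_triangle.
Qed.

Lemma eq_of_dist_small (x y : A) : (forall eps, 0 < eps -> dist x y < eps) -> x = y.
Proof.
  intros H.
  assert (Hxy : add x (opp y) = zero).
  { apply norm_eq0. pose proof (norm_nonneg (add x (opp y))).
    destruct (Rle_lt_dec (norm (add x (opp y))) 0); [lra|].
    specialize (H _ r). unfold dist in H. lra. }
  transitivity (add (add x (opp y)) y); [ring|]. rewrite Hxy. ring.
Qed.

Definition converges (u : nat -> A) (l : A) : Prop :=
  forall eps, 0 < eps -> exists N, forall n, (N <= n)%nat -> dist (u n) l < eps.

Lemma limit_self_adjoint (u : nat -> A) l :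
  converges u l -> (forall n, star (u n) = u n) -> star l = l.
Proof.
  intros Hl Hu. apply eq_of_dist_small. intros eps Heps.
  destruct (Hl (eps / 2) ltac:(lra)) as [N HN]. specialize (HN N (le_n N)).
  assert (Hstar : dist (star l) (u N) = dist (u N) l).
  { rewrite (dist_sym (u N) l). unfold dist.
    rewrite <- (Hu N) at 1. rewrite <- star_opp, <- star_add. apply norm_star. }
  pose proof (dist_triangle (star l) (u N) l). lra.
Qed.

Lemma increments_telescope (u : nat -> A) :
  (forall n, dist (u (S n)) (u n) <= (1/2) ^ n) ->
  forall N k, dist (u (N + k)%nat) (u N) <= 2 * (1/2) ^ N - 2 * (1/2) ^ (N + k).
Proof.
  intros Hu N k. induction k as [|k IH].
  - rewrite Nat.add_0_r. unfold dist. rewrite add_oppr, norm_zero. lra.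
  - pose proof (dist_triangle (u (N + S k)%nat) (u (N + k)%nat) (u N)).
    replace (N + S k)%nat with (S (N + k)) in * by lia.
    pose proof (Hu (N + k)%nat). simpl pow. lra.
Qed.

Lemma halving_increments_converge (u : nat -> A) :
  (forall n, dist (u (S n)) (u n) <= (1/2) ^ n) -> exists l, converges u l.
Proof.
  intros Hu. apply complete. intros eps Heps.
  destruct (pow_lt_1_zero (1/2) ltac:(rewrite Rabs_right; lra) (eps / 4) ltac:(lra))
    as [N HN].
  exists N. intros n m Hn Hm.
  assert (Hfar : forall p, (N <= p)%nat -> dist (u p) (u N) <= 2 * (1/2) ^ N).
  { intros p Hp. replace p with (N + (p - N))%nat by lia.
    pose proof (increments_telescope u Hu N (p - N)).
    pose proof (pow_le (1/2) (N + (p - N)) ltac:(lra)). lra. }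
  specialize (HN N (le_n N)). rewrite Rabs_right in HN by (apply Rle_ge, pow_le; lra).
  pose proof (Hfar n Hn). pose proof (Hfar m Hm).
  pose proof (dist_triangle (u n) (u N) (u m)). rewrite (dist_sym (u N) (u m)) in *.
  unfold dist in *. lra.
Qed.

Section SquareRoot.
Variable x : A.
Hypothesis x_sa : star x = x.
Hypothesis x_small : norm x <= 1/2.

(* Picard iteration for [z = (x + z^2)/2]; a solution [z] gives [(1 - z)^2 = 1 - x]. *)
Fixpoint picard (n : nat) : A :=
  match n with
  | O => zero
  | S n => mul (rconst (1/2)) (add x (mul (picard n) (picard n)))
  end.

Lemma picard_sa n : star (picard n) = picard n.
Proof.
  induction n as [|n IH]; simpl.
  - apply star_zero.
  - rewrite star_mul, star_rconst, star_add, star_mul, IH, x_sa, mul_comm. reflexivity.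
Qed.

Lemma picard_bound n : norm (picard n) <= 1/2.
Proof.
  induction n as [|n IH]; simpl.
  - rewrite norm_zero. lra.
  - rewrite norm_rconst_mul, Rabs_right by lra.
    pose proof (norm_triangle _ x (mul (picard n) (picard n))).
    pose proof (norm_submult _ (picard n) (picard n)). pose proof (norm_nonneg (picard n)).
    nra.
Qed.

(* [z_(n+2) - z_(n+1) = (z_(n+1) - z_n) (z_(n+1) + z_n) / 2]: the iteration contracts. *)
Lemma picard_increment n : dist (picard (S n)) (picard n) <= (1/2) ^ n.
Proof.
  induction n as [|n IH]; unfold dist in *.
  - simpl. replace (add (mul (rconst (1/2)) (add x (mul zero zero))) (opp zero))
      with (mul (rconst (1/2)) x) by ring.
    rewrite norm_rconst_mul, Rabs_right by lra. lra.
  - replace (add (picard (S (S n))) (opp (picard (S n)))) with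
      (mul (rconst (1/2))
         (mul (add (picard (S n)) (opp (picard n))) (add (picard (S n)) (picard n))))
      by (simpl; ring).
    rewrite norm_rconst_mul, Rabs_right by lra.
    pose proof (norm_submult _ (add (picard (S n)) (opp (picard n)))
                  (add (picard (S n)) (picard n))).
    pose proof (norm_triangle _ (picard (S n)) (picard n)).
    pose proof (picard_bound (S n)). pose proof (picard_bound n).
    pose proof (norm_nonneg (add (picard (S n)) (opp (picard n)))).
    pose proof (norm_nonneg (add (picard (S n)) (picard n))).
    simpl pow. nra.
Qed.

Lemma picard_limit_fixed l :
  converges picard l -> l = mul (rconst (1/2)) (add x (mul l l)).
Proof.
  intros Hl. apply eq_of_dist_small. intros eps Heps.
  set (K := 1/2 + norm l).
  assert (HK : 0 <= K) by (pose proof (norm_nonneg l); unfold K; lra).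
  destruct (Hl (eps / (1 + K)) ltac:(apply Rdiv_lt_0_compat; lra)) as [N HN].
  pose proof (HN N (le_n _)) as HN0. pose proof (HN (S N) (le_S _ _ (le_n _))) as HN1.
  rewrite dist_sym in HN1.
  pose proof (dist_triangle l (picard (S N)) (mul (rconst (1/2)) (add x (mul l l)))).
  assert (Hprod : dist (picard (S N)) (mul (rconst (1/2)) (add x (mul l l)))
                  <= 1/2 * (dist (picard N) l * K)).
  { unfold dist.
    replace (add (picard (S N)) (opp (mul (rconst (1/2)) (add x (mul l l))))) with
      (mul (rconst (1/2)) (mul (add (picard N) (opp l)) (add (picard N) l))) by (simpl; ring).
    rewrite norm_rconst_mul, Rabs_right by lra.
    pose proof (norm_submult _ (add (picard N) (opp l)) (add (picard N) l)).
    pose proof (norm_triangle _ (picard N) l). pose proof (picard_bound N).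
    pose proof (norm_nonneg (add (picard N) (opp l))).
    pose proof (norm_nonneg (add (picard N) l)). unfold K. nra. }
  assert (eps / (1 + K) * (1 + K) = eps) by (field; lra).
  pose proof (norm_nonneg (add (picard N) (opp l))). unfold dist in *. nra.
Qed.

Lemma sqrt_one_minus : exists y : A, star y = y /\ mul y y = add one (opp x).
Proof.
  destruct (halving_increments_converge picard picard_increment) as [l Hl].
  pose proof (limit_self_adjoint picard l Hl picard_sa) as l_sa.
  assert (Htwice : mul (add one one) l = add x (mul l l)).
  { rewrite (picard_limit_fixed l Hl) at 1.
    rewrite mul_assoc, <- rconst_1, <- rconst_add, <- rconst_mul.
    replace ((1 + 1) * (1/2)) with 1 by field. rewrite rconst_1. ring. }
  exists (add one (opp l)). split.
  - rewrite star_add, star_opp, l_sa, star_one. reflexivity.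
  - transitivity (add (add one (mul l l)) (opp (mul (add one one) l))); [ring|].
    rewrite Htwice. ring.
Qed.
End SquareRoot.

Lemma bounded_by_square (c : A) : star c = c ->
  exists M, 0 < M /\ exists y : A, star y = y /\ mul y y = add (rconst M) (opp c).
Proof.
  intros Hc. pose proof (norm_nonneg c).
  set (s := / (2 * (norm c + 1))).
  assert (Hs : 0 < s) by (unfold s; apply Rinv_0_lt_compat; lra).
  destruct (sqrt_one_minus (mul (rconst s) c)) as [y0 [Hy0 Ey0]].
  - rewrite star_mul, star_rconst, Hc, mul_comm. reflexivity.
  - rewrite norm_rconst_mul, Rabs_right by lra. unfold s.
    apply (Rmult_le_reg_l (2 * (norm c + 1))); [lra|].
    rewrite <- Rmult_assoc, Rinv_r by lra. lra.
  - exists (/ s). split; [apply Rinv_0_lt_compat; lra|].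
    exists (mul (rconst (sqrt (/ s))) y0). split.
    + rewrite star_mul, star_rconst, Hy0, mul_comm. reflexivity.
    + transitivity (mul (mul (rconst (sqrt (/ s))) (rconst (sqrt (/ s)))) (mul y0 y0)); [ring|].
      rewrite <- rconst_mul, sqrt_sqrt, Ey0 by (left; apply Rinv_0_lt_compat; lra).
      transitivity (add (rconst (/ s)) (opp (mul (mul (rconst (/ s)) (rconst s)) c))); [ring|].
      rewrite <- rconst_mul, Rinv_l, rconst_1 by lra. ring.
Qed.
End Algebra.
Arguments rconst {A} t.

Section LatticeFacts.
Variable L : DLattice.
Implicit Types x y z : L.

Lemma meet_lb1 x y : le (meet x y) x.
Proof. apply (proj1 (meet_glb L x y (meet x y))), le_refl. Qed.
Lemma meet_lb2 x y : le (meet x y) y.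
Proof. apply (proj1 (meet_glb L x y (meet x y))), le_refl. Qed.
Lemma le_meetI x y z : le z x -> le z y -> le z (meet x y).
Proof. intros; apply meet_glb; auto. Qed.
Lemma join_ub1 x y : le x (join x y).
Proof. apply (proj1 (join_lub L x y (join x y))), le_refl. Qed.
Lemma join_ub2 x y : le y (join x y).
Proof. apply (proj1 (join_lub L x y (join x y))), le_refl. Qed.
Lemma join_leI x y z : le x z -> le y z -> le (join x y) z.
Proof. intros; apply join_lub; auto. Qed.

Lemma meet_mono x x' y y' : le x x' -> le y y' -> le (meet x y) (meet x' y').
Proof.
  intros. apply le_meetI.
  - eapply le_trans; [apply meet_lb1|]; auto.
  - eapply le_trans; [apply meet_lb2|]; auto.
Qed.
Lemma join_mono x x' y y' : le x x' -> le y y' -> le (join x y) (join x' y').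
Proof.
  intros. apply join_leI.
  - eapply le_trans; [|apply join_ub1]; auto.
  - eapply le_trans; [|apply join_ub2]; auto.
Qed.

Lemma meet_comm x y : meet x y = meet y x.
Proof. apply le_antisym; apply le_meetI; (apply meet_lb1 || apply meet_lb2). Qed.
Lemma meet_top x : meet x top = x.
Proof. apply le_antisym; [apply meet_lb1|apply le_meetI; [apply le_refl|apply top_max]]. Qed.
Lemma le_meet_eq x y : le x y -> meet x y = x.
Proof. intros. apply le_antisym; [apply meet_lb1|apply le_meetI; auto; apply le_refl]. Qed.
Lemma le_bot_eq x : le x bot -> x = bot.
Proof. intros; apply le_antisym; auto. apply bot_min. Qed.
Lemma top_le_eq x : le top x -> x = top.
Proof. intros; apply le_antisym; auto. apply top_max. Qed.

Lemma le_by_cases c1 c2 z t :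
  le top (join c1 c2) -> le (meet z c1) t -> le (meet z c2) t -> le z t.
Proof.
  intros Hcover H1 H2. rewrite <- (meet_top z).
  eapply le_trans; [apply meet_mono; [apply le_refl|apply Hcover]|].
  rewrite meet_join_distr. apply join_leI; auto.
Qed.

Lemma bigjoin_le (l : list L) z : (forall y, In y l -> le y z) -> le (bigjoin l) z.
Proof. induction l; simpl; intros H; [apply bot_min|apply join_leI; auto]. Qed.

Lemma le_bigjoin (l : list L) y : In y l -> le y (bigjoin l).
Proof.
  induction l as [|w l IH]; simpl; [intros []|intros [<-|H]]; [apply join_ub1|].
  eapply le_trans; [apply IH; auto|apply join_ub2].
Qed.

Lemma meet_bigjoin x (l : list L) : meet x (bigjoin l) = bigjoin (map (meet x) l).
Proof.
  induction l as [|w l IH]; simpl; [apply le_bot_eq, meet_lb2|].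
  rewrite meet_join_distr, IH. reflexivity.
Qed.

Lemma bigjoin_app (l1 l2 : list L) : le (join (bigjoin l1) (bigjoin l2)) (bigjoin (l1 ++ l2)).
Proof. apply join_leI; apply bigjoin_le; intros; apply le_bigjoin, in_or_app; auto. Qed.

Lemma bigjoin_refine (U : L -> Prop) (l : list L) :
  (forall y, In y l -> exists u, U u /\ le y u) ->
  exists U0, (forall u, In u U0 -> U u) /\ le (bigjoin l) (bigjoin U0).
Proof.
  induction l as [|y l IH]; intros H.
  - exists nil. split; [intros _ []|apply le_refl].
  - destruct (H y (or_introl eq_refl)) as [u [Uu Hyu]].
    destruct IH as [U0 [HU0 Hl]]; [intros; apply H; simpl; auto|].
    exists (u :: U0). split; [intros v [<-|Hv]; auto|]. simpl. apply join_mono; auto.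
Qed.
End LatticeFacts.

Section FrameFacts.
Variable F : Frame.
Implicit Types x y z : F.

Lemma fle_sup (S : F -> Prop) x : S x -> fle x (fsup S).
Proof. intros. apply (proj1 (fsup_lub F S (fsup S))); auto. apply fle_refl. Qed.
Lemma fsup_le (S : F -> Prop) z : (forall x, S x -> fle x z) -> fle (fsup S) z.
Proof. intros. apply fsup_lub. auto. Qed.
Lemma fmeet_lb1 x y : fle (fmeet x y) x.
Proof. apply (proj1 (fmeet_glb F x y (fmeet x y))), fle_refl. Qed.
Lemma fmeet_lb2 x y : fle (fmeet x y) y.
Proof. apply (proj1 (fmeet_glb F x y (fmeet x y))), fle_refl. Qed.
Lemma fle_meetI x y z : fle z x -> fle z y -> fle z (fmeet x y).
Proof. intros; apply fmeet_glb; auto. Qed.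
Lemma fmeet_comm x y : fmeet x y = fmeet y x.
Proof. apply fle_antisym; apply fle_meetI; (apply fmeet_lb1 || apply fmeet_lb2). Qed.
Lemma fjoin_le x y z : fle x z -> fle y z -> fle (fjoin x y) z.
Proof. intros. apply fsup_le. intros w [->| ->]; auto. Qed.
Lemma fbot_le z : fle fbot z.
Proof. apply fsup_le. intros _ []. Qed.
Lemma fle_meet_eq x y : fle x y -> fmeet x y = x.
Proof. intros. apply fle_antisym; [apply fmeet_lb1|apply fle_meetI; auto; apply fle_refl]. Qed.
Lemma fsup_mono (S T : F -> Prop) :
  (forall x, S x -> exists y, T y /\ fle x y) -> fle (fsup S) (fsup T).
Proof.
  intros H. apply fsup_le. intros x Sx. destruct (H x Sx) as [y [Ty Hy]].
  eapply fle_trans; [apply Hy|apply fle_sup; auto].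
Qed.
End FrameFacts.

Lemma frame_hom_mono {F G : Frame} (h : F -> G) :
  frame_hom h -> forall x y, fle x y -> fle (h x) (h y).
Proof. intros [Hm _] x y Hxy. rewrite <- (fle_meet_eq _ _ _ Hxy), Hm. apply fmeet_lb2. Qed.

Lemma dfhom_mono {L : DLattice} {F : Frame} (h : L -> F) :
  dlat_frame_hom h -> forall x y, le x y -> fle (h x) (h y).
Proof. intros [Hm _] x y Hxy. rewrite <- (le_meet_eq _ _ _ Hxy), Hm. apply fmeet_lb2. Qed.

Lemma dfhom_bigjoin {L : DLattice} {F : Frame} (h : L -> F) (Hh : dlat_frame_hom h)
  (l : list L) z : (forall y, In y l -> fle (h y) z) -> fle (h (bigjoin l)) z.
Proof.
  destruct Hh as [_ [Hj [_ Hb]]]. induction l; simpl; intros H.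
  - rewrite Hb. apply fbot_le.
  - rewrite Hj. apply fjoin_le; auto.
Qed.

Lemma meet_image_sups {L : DLattice} {O : Frame} (f : L -> O) (Hf : dlat_frame_hom f)
  (U V : L -> Prop) :
  fle (fmeet (fsup (image f U)) (fsup (image f V))) (fsup (image f (meet_sets U V))).
Proof.
  rewrite frame_distr. apply fsup_le. intros y [s [[x [Vx ->]] ->]].
  rewrite fmeet_comm, frame_distr. apply fsup_le. intros y [t [[x' [Ux' ->]] ->]].
  rewrite <- (proj1 Hf). apply fle_sup. exists (meet x' x). split; [|rewrite meet_comm; reflexivity].
  exists x', x. auto.
Qed.

Section IdealFrame.
Variable L : DLattice.

Definition is_ideal (I : L -> Prop) : Prop :=
  (forall x y, le y x -> I x -> I y) /\ I bot /\ (forall x y, I x -> I y -> I (join x y)).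

Definition Idl : Type := { I : L -> Prop | is_ideal I }.
Definition ival (I : Idl) : L -> Prop := proj1_sig I.
Coercion ival : Idl >-> Funclass.

Lemma Idl_ext (I J : Idl) : (forall x, I x <-> J x) -> I = J.
Proof.
  destruct I as [I HI], J as [J HJ]; unfold ival; simpl; intros H.
  assert (I = J) by (apply functional_extensionality; intros; apply propositional_extensionality; auto).
  subst. f_equal. apply proof_irrelevance.
Qed.

Lemma idl_down (I : Idl) x y : le y x -> I x -> I y.
Proof. apply (proj2_sig I). Qed.
Lemma idl_bot (I : Idl) : I bot.
Proof. apply (proj2_sig I). Qed.
Lemma idl_join (I : Idl) x y : I x -> I y -> I (join x y).
Proof. apply (proj2_sig I). Qed.
Lemma idl_bigjoin (I : Idl) (l : list L) : (forall y, In y l -> I y) -> I (bigjoin l).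
Proof. induction l; simpl; intros H; [apply idl_bot|apply idl_join; auto]. Qed.

Definition Ile (I J : Idl) : Prop := forall x, I x -> J x.

Lemma meet_ideal (I J : Idl) : is_ideal (fun x => I x /\ J x).
Proof.
  split; [|split].
  - intros x y H [H1 H2]; split; eapply idl_down; eauto.
  - split; apply idl_bot.
  - intros x y [] []; split; apply idl_join; auto.
Qed.
Definition Imeet (I J : Idl) : Idl := exist _ _ (meet_ideal I J).

Definition generated (S : Idl -> Prop) (x : L) : Prop :=
  exists l, (forall y, In y l -> exists I, S I /\ I y) /\ le x (bigjoin l).

Lemma generated_ideal S : is_ideal (generated S).
Proof.
  split; [|split].
  - intros x y H [l [Hl Hx]]. exists l. split; auto. eapply le_trans; eauto.
  - exists nil. split; [intros _ []|apply le_refl].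
  - intros x y [l1 [H1 E1]] [l2 [H2 E2]]. exists (l1 ++ l2). split.
    + intros z Hz. apply in_app_or in Hz. destruct Hz; auto.
    + eapply le_trans; [|apply bigjoin_app]. apply join_mono; auto.
Qed.
Definition Isup (S : Idl -> Prop) : Idl := exist _ _ (generated_ideal S).

Lemma top_ideal : is_ideal (fun _ : L => True).
Proof. split; auto. Qed.
Definition Itop : Idl := exist _ _ top_ideal.

Lemma Ile_refl I : Ile I I.
Proof. firstorder. Qed.
Lemma Ile_trans I J K : Ile I J -> Ile J K -> Ile I K.
Proof. firstorder. Qed.
Lemma Ile_antisym I J : Ile I J -> Ile J I -> I = J.
Proof. intros; apply Idl_ext; firstorder. Qed.
Lemma Imeet_glb I J K : Ile K (Imeet I J) <-> (Ile K I /\ Ile K J).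
Proof. unfold Ile, Imeet, ival; simpl. firstorder. Qed.
Lemma Itop_max I : Ile I Itop.
Proof. unfold Ile, Itop, ival; simpl; auto. Qed.

Lemma Isup_lub S Z : Ile (Isup S) Z <-> (forall I, S I -> Ile I Z).
Proof.
  split.
  - intros H I SI x Ix. apply H. exists (x :: nil). split.
    + intros y [<-|[]]. eauto.
    + simpl. apply join_ub1.
  - intros H x [l [Hl Hx]]. eapply idl_down; [apply Hx|]. apply idl_bigjoin.
    intros y Hy. destruct (Hl y Hy) as [I [SI Iy]]. eapply H; eauto.
Qed.

Lemma Imeet_Isup X S : Imeet X (Isup S) = Isup (fun Y => exists s, S s /\ Y = Imeet X s).
Proof.
  apply Idl_ext. intros x. unfold Imeet, Isup, ival; simpl. split.
  - intros [Xx [l [Hl Hx]]]. exists (map (meet x) l). split.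
    + intros y Hy. apply in_map_iff in Hy. destruct Hy as [y0 [<- Hy0]].
      destruct (Hl y0 Hy0) as [I [SI Iy0]]. exists (Imeet X I). split; [eauto|].
      unfold Imeet, ival; simpl. split; eapply idl_down; eauto; [apply meet_lb1|apply meet_lb2].
    + rewrite <- meet_bigjoin. apply le_meetI; auto. apply le_refl.
  - intros [l [Hl Hx]]. split.
    + eapply idl_down; [apply Hx|]. apply idl_bigjoin. intros y Hy.
      destruct (Hl y Hy) as [I [[s [Ss ->]] Iy]]. apply Iy.
    + exists l. split; auto. intros y Hy.
      destruct (Hl y Hy) as [I [[s [Ss ->]] Iy]]. exists s. split; auto. apply Iy.
Qed.

Definition IFrame : Frame := {|
  fcar := Idl; fle := Ile; fmeet := Imeet; fsup := Isup; ftop := Itop;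
  fle_refl := Ile_refl; fle_trans := Ile_trans; fle_antisym := Ile_antisym;
  fmeet_glb := Imeet_glb; fsup_lub := Isup_lub; ftop_max := Itop_max;
  frame_distr := Imeet_Isup |}.

Lemma in_fbot (x : L) : ival (@fbot IFrame) x <-> le x bot.
Proof.
  unfold fbot; simpl; unfold ival; simpl; unfold generated. split.
  - intros [l [Hl Hx]]. eapply le_trans; [apply Hx|]. apply bigjoin_le.
    intros y Hy. destruct (Hl y Hy) as [I [[] _]].
  - intros H. exists nil. split; auto. intros _ [].
Qed.

Lemma eq_fbot (I : Idl) : (forall x, I x -> le x bot) -> I = @fbot IFrame.
Proof.
  intros H. apply Idl_ext. intros x. rewrite in_fbot. split; auto.
  intros Hx. eapply idl_down; [apply Hx|]. apply idl_bot.
Qed.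

Lemma in_fjoin (I J : Idl) x y z : I x -> J y -> le z (join x y) -> ival (@fjoin IFrame I J) z.
Proof.
  intros Ix Jy Hz. unfold fjoin; simpl; unfold ival; simpl; unfold generated.
  exists (x :: y :: nil). split.
  - intros w [<-|[<-|[]]]; [exists I | exists J]; auto.
  - simpl. eapply le_trans; [apply Hz|]. apply join_mono; [apply le_refl|apply join_ub1].
Qed.

Definition ideal_sup {O : Frame} (f : L -> O) (I : Idl) : O := fsup (image f (ival I)).

Lemma ideal_sup_hom {O : Frame} (f : L -> O) (Hf : dlat_frame_hom f) :
  frame_hom (F := IFrame) (ideal_sup f).
Proof.
  pose proof (dfhom_mono f Hf) as fmono.
  split; [|split].
  - intros I J. apply fle_antisym.
    + apply fsup_le. intros y [x [[Ix Jx] ->]].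
      apply fle_meetI; apply fle_sup; exists x; auto.
    + eapply fle_trans; [apply (meet_image_sups f Hf (ival I) (ival J))|].
      apply fsup_le. intros y [x [[u [v [Iu [Jv ->]]]] ->]].
      apply fle_sup. exists (meet u v). split; auto.
      split; eapply idl_down; eauto; [apply meet_lb1|apply meet_lb2].
  - apply fle_antisym; [apply ftop_max|]. rewrite <- (proj1 (proj2 (proj2 Hf))).
    apply fle_sup. exists top. split; simpl; auto.
  - intros S. apply fle_antisym.
    + apply fsup_le. intros y [x [[l [Hl Hx]] ->]].
      eapply fle_trans; [apply fmono, Hx|]. apply dfhom_bigjoin; auto.
      intros y Hy. destruct (Hl y Hy) as [I [SI Iy]].
      eapply fle_trans; [|apply fle_sup; exists I; split; eauto].
      apply fle_sup. exists y. auto.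
    + apply fsup_le. intros y [I [SI ->]]. apply fsup_le. intros y [x [Ix ->]].
      apply fle_sup. exists x. split; auto. exists (x :: nil). split.
      * intros w [<-|[]]. eauto.
      * simpl. apply join_ub1.
Qed.
End IdealFrame.

Section LAInduction.
Variables (A : CommCStarAlg) (L : DLattice) (DL : sa A -> L).
Hypothesis HL : is_LA L DL.
Variable P : L -> Prop.
Hypothesis P_meet : forall x y, P x -> P y -> P (meet x y).
Hypothesis P_join : forall x y, P x -> P y -> P (join x y).
Hypothesis P_top : P top.
Hypothesis P_bot : P bot.
Hypothesis P_gen : forall a, P (DL a).

Definition SubL : Type := { x : L | P x }.

Lemma SubL_ext (x y : SubL) : proj1_sig x = proj1_sig y -> x = y.
Proof. destruct x, y; simpl; intros; subst; f_equal; apply proof_irrelevance. Qed.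

Definition SubLattice : DLattice.
Proof.
  refine {| lcar := SubL;
            le := fun x y => le (proj1_sig x) (proj1_sig y);
            meet := fun x y => exist _ _ (P_meet _ _ (proj2_sig x) (proj2_sig y));
            join := fun x y => exist _ _ (P_join _ _ (proj2_sig x) (proj2_sig y));
            top := exist _ _ P_top; bot := exist _ _ P_bot |}.
  - intros; apply le_refl.
  - intros x y z; apply le_trans.
  - intros x y H1 H2; apply SubL_ext, le_antisym; auto.
  - intros x y z; apply meet_glb.
  - intros x y z; apply join_lub.
  - intros; apply top_max.
  - intros; apply bot_min.
  - intros; apply SubL_ext, meet_join_distr.
Defined.

(* Induction over [L]: by freeness the inclusion of the sublattice is onto. *)
Lemma LA_ind : forall x, P x.
Proof.
  destruct HL as [HR HU].
  set (E := fun a => (exist _ (DL a) (P_gen a) : SubLattice)).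
  destruct (HU SubLattice E) as [g [Hg [HgD _]]].
  { destruct HR as [R1 [R2 [R3 [R4 R5]]]].
    split; [|split; [|split; [|split]]].
    - apply SubL_ext; simpl; apply R1.
    - intros a; apply SubL_ext; simpl; apply R2.
    - intros b; apply SubL_ext; simpl; apply R3.
    - intros a b; apply R4.
    - intros a b; apply SubL_ext; simpl; apply R5. }
  destruct (HU L DL HR) as [h0 [_ [_ Huniq]]].
  assert (Hid : forall x, x = h0 x).
  { apply (Huniq (fun x => x)); [split; [|split; [|split]]|]; reflexivity. }
  assert (Hincl : forall x, proj1_sig (g x) = h0 x).
  { apply (Huniq (fun x => proj1_sig (g x))).
    - destruct Hg as [G1 [G2 [G3 G4]]]. split; [|split; [|split]].
      + intros x y. rewrite G1. reflexivity.
      + intros x y. rewrite G2. reflexivity.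
      + rewrite G3. reflexivity.
      + rewrite G4. reflexivity.
    - intros a. rewrite HgD. reflexivity. }
  intros x. rewrite (Hid x), <- Hincl. apply (proj2_sig (g x)).
Qed.
End LAInduction.

Lemma Q2R_pos q : (0 < q)%Q -> 0 < Q2R q.
Proof. intros H. apply Qlt_Rlt in H. change (Q2R 0) with (0 * / 1) in H. lra. Qed.

Lemma rational_below (q : Q) (t : R) :
  (0 < q)%Q -> 0 < t -> exists r : Q, (0 < r)%Q /\ Q2R r * t <= Q2R q.
Proof.
  intros Hq Ht. pose proof (Q2R_pos q Hq) as Hq'.
  destruct (archimed t) as [Hup _].
  destruct (up t) as [|p|p] eqn:Eup.
  - simpl in Hup. lra.
  - assert (Hval : Q2R (q * (1 # p)) = Q2R q / IZR (Z.pos p)).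
    { rewrite Q2R_mult. unfold Q2R at 2. simpl. field. apply IZR_nz. }
    exists (q * (1 # p))%Q. split.
    + apply Rlt_Qlt. rewrite Hval. change (Q2R 0) with (0 * / 1).
      assert (0 < Q2R q / IZR (Z.pos p)) by (apply Rdiv_lt_0_compat; lra). lra.
    + assert (Hratio : t / IZR (Z.pos p) <= 1).
      { apply (Rmult_le_reg_r (IZR (Z.pos p))); [lra|].
        unfold Rdiv. rewrite Rmult_assoc, Rinv_l by lra. lra. }
      rewrite Hval.
      replace (Q2R q / IZR (Z.pos p) * t) with (Q2R q * (t / IZR (Z.pos p))) by (field; lra).
      nra.
  - pose proof (IZR_lt _ _ (Pos2Z.neg_is_neg p)). lra.
Qed.

Lemma Q2R_half q : Q2R (q * (1 # 2)) = Q2R q / 2.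
Proof. rewrite Q2R_mult. unfold Q2R at 2. simpl. field. Qed.

Lemma Q_half_pos q : (0 < q)%Q -> (0 < q * (1 # 2))%Q.
Proof.
  intros H. apply Rlt_Qlt. rewrite Q2R_half. pose proof (Q2R_pos _ H).
  change (Q2R 0) with (0 * / 1). lra.
Qed.

Section Relations.
Variable A : CommCStarAlg.
Add Ring alg_ring : (alg_ring_theory A).
Variable L : DLattice.
Variable DL : sa A -> L.
Hypothesis HR : LA_relations L DL.

Definition self_adjoint (x : A) : Prop := star x = x.

Lemma self_adjoint_add x y : self_adjoint x -> self_adjoint y -> self_adjoint (add x y).
Proof. unfold self_adjoint; intros; rewrite star_add; congruence. Qed.
Lemma self_adjoint_mul x y : self_adjoint x -> self_adjoint y -> self_adjoint (mul x y).
Proof. unfold self_adjoint; intros Hx Hy; rewrite star_mul, Hx, Hy; apply mul_comm. Qed.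
Lemma self_adjoint_opp x : self_adjoint x -> self_adjoint (opp x).
Proof. unfold self_adjoint; intros; rewrite star_opp; congruence. Qed.
Lemma self_adjoint_rconst t : self_adjoint (@rconst A t).
Proof. apply star_rconst. Qed.
Lemma self_adjoint_one : self_adjoint (@one A).
Proof. apply star_one. Qed.
Hint Resolve self_adjoint_add self_adjoint_mul self_adjoint_opp self_adjoint_rconst
  self_adjoint_one : sa.

Definition re_part (x : A) : A := mul (rconst (1/2)) (add x (star x)).

Lemma re_part_sa x : star (re_part x) = re_part x.
Proof.
  unfold re_part. rewrite star_mul, star_rconst, star_add, star_star, mul_comm.
  f_equal. ring.
Qed.

Lemma re_part_id x : self_adjoint x -> re_part x = x.
Proof.
  unfold self_adjoint, re_part; intros Hx. rewrite Hx.
  transitivity (mul (mul (rconst (1/2)) (add (rconst 1) (rconst 1))) x);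
    [rewrite rconst_1; ring|].
  rewrite <- rconst_add, <- rconst_mul. replace (1/2 * (1 + 1)) with 1 by field.
  rewrite rconst_1. ring.
Qed.

Definition D (x : A) : L := DL (exist _ (re_part x) (re_part_sa x)).

Lemma DL_D (u : sa A) : DL u = D (proj1_sig u).
Proof.
  unfold D. f_equal. destruct u as [u Hu]. simpl.
  generalize (re_part_sa u). rewrite (re_part_id u Hu). intros H.
  f_equal. apply proof_irrelevance.
Qed.

(* Rewrites [D (proj1_sig u)] back to the generator [DL u], exposing the relations of [L]. *)
Ltac to_DL u := let E := fresh in pose proof (DL_D u) as E;
  cbn [proj1_sig sa_one sa_add sa_opp sa_mul] in E; rewrite <- E; clear E.

Lemma D_one : D one = top.
Proof. to_DL (sa_one A). apply HR. Qed.

Lemma D_disjoint x : self_adjoint x -> meet (D x) (D (opp x)) = bot.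
Proof. intros H. to_DL (exist _ x H). to_DL (sa_opp (exist _ x H)). apply HR. Qed.

Lemma D_neg_square b : self_adjoint b -> D (opp (mul b b)) = bot.
Proof. intros H. to_DL (sa_opp (sa_mul (exist _ b H) (exist _ b H))). apply HR. Qed.

Lemma D_add x y : self_adjoint x -> self_adjoint y -> le (D (add x y)) (join (D x) (D y)).
Proof.
  intros Hx Hy. to_DL (sa_add (exist _ x Hx) (exist _ y Hy)).
  to_DL (exist _ x Hx). to_DL (exist _ y Hy). apply HR.
Qed.

Lemma D_mul x y : self_adjoint x -> self_adjoint y ->
  D (mul x y) = join (meet (D x) (D y)) (meet (D (opp x)) (D (opp y))).
Proof.
  intros Hx Hy. to_DL (sa_mul (exist _ x Hx) (exist _ y Hy)).
  to_DL (sa_opp (exist _ x Hx)). to_DL (sa_opp (exist _ y Hy)).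
  to_DL (exist _ x Hx). to_DL (exist _ y Hy). apply HR.
Qed.

(* Constants: [D_t = 0] for [t <= 0], as [t = -(sqrt(-t))^2], and [D_t = 1] for [t > 0]. *)
Lemma D_const_nonpos t : t <= 0 -> D (rconst t) = bot.
Proof.
  intros Ht. rewrite <- (D_neg_square (rconst (sqrt (- t)))) by auto with sa.
  f_equal. rewrite <- rconst_mul, sqrt_sqrt, <- rconst_opp by lra. f_equal. ring.
Qed.

Lemma D_const_pos t : 0 < t -> D (rconst t) = top.
Proof.
  intros Ht. apply top_le_eq. rewrite <- D_one.
  replace (@one A) with (mul (@rconst A t) (rconst (/ t)))
    by (rewrite <- rconst_mul, Rinv_r by lra; apply rconst_1).
  rewrite D_mul by auto with sa. apply join_leI; [apply meet_lb1|].
  rewrite <- rconst_opp, D_const_nonpos by lra.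
  eapply le_trans; [apply meet_lb1|apply bot_min].
Qed.

Lemma le_D_top z x : D x = top -> le z (D x).
Proof. intros ->. apply top_max. Qed.

Lemma le_D_mul z x y : self_adjoint x -> self_adjoint y ->
  le z (D x) -> le z (D y) -> le z (D (mul x y)).
Proof.
  intros. rewrite D_mul by auto. eapply le_trans; [|apply join_ub1]. apply le_meetI; auto.
Qed.

(* [D_x /\ D_y <= D_(x+y)], from [D_x <= D_(x+y) \/ D_(-y)] and [D_y /\ D_(-y) = 0]. *)
Lemma le_D_add z x y : self_adjoint x -> self_adjoint y ->
  le z (D x) -> le z (D y) -> le z (D (add x y)).
Proof.
  intros Hx Hy Hzx Hzy.
  assert (H : le (D x) (join (D (add x y)) (D (opp y)))).
  { replace x with (add (add x y) (opp y)) at 1 by ring. apply D_add; auto with sa. }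
  eapply le_trans; [apply le_meetI; [apply Hzx|apply Hzy]|].
  eapply le_trans; [apply meet_mono; [apply H|apply le_refl]|].
  rewrite meet_comm, meet_join_distr. apply join_leI; [apply meet_lb2|].
  rewrite D_disjoint by auto. apply bot_min.
Qed.

Lemma D_shift_down x t : self_adjoint x -> t <= 0 -> le (D (add x (rconst t))) (D x).
Proof.
  intros Hx Ht. eapply le_trans; [apply D_add; auto with sa|].
  rewrite D_const_nonpos by auto. apply join_leI; [apply le_refl|apply bot_min].
Qed.

Lemma D_eventually_top c : self_adjoint c ->
  exists N, 0 < N /\ forall N', N <= N' -> D (add (rconst N') (opp c)) = top.
Proof.
  intros Hc. destruct (bounded_by_square A c Hc) as [M [HM [y [Hy Ey]]]].
  exists (2 * M). split; [lra|]. intros N' HN'. apply top_le_eq.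
  rewrite <- (D_const_pos (N' - M)) by lra.
  replace (@rconst A (N' - M)) with (add (add (rconst N') (opp c)) (opp (mul y y)))
    by (rewrite Ey, rconst_sub; ring).
  eapply le_trans; [apply D_add; auto with sa|].
  rewrite D_neg_square by auto. apply join_leI; [apply le_refl|apply bot_min].
Qed.

Lemma D_common_bound a b : self_adjoint a -> self_adjoint b -> exists N, 0 < N /\
  D (add (rconst N) (opp a)) = top /\ D (add (rconst N) (opp (opp a))) = top /\
  D (add (rconst N) (opp b)) = top /\ D (add (rconst N) (opp (opp b))) = top.
Proof.
  intros Ha Hb.
  destruct (D_eventually_top a Ha) as [N1 [P1 H1]].
  destruct (D_eventually_top (opp a) ltac:(auto with sa)) as [N2 [P2 H2]].
  destruct (D_eventually_top b Hb) as [N3 [P3 H3]].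
  destruct (D_eventually_top (opp b) ltac:(auto with sa)) as [N4 [P4 H4]].
  exists (N1 + N2 + N3 + N4). repeat split; [lra|apply H1|apply H2|apply H3|apply H4]; lra.
Qed.

Lemma rconst_2 : @rconst A 2 = add one one.
Proof. rewrite <- rconst_1, <- rconst_add. f_equal; ring. Qed.

Ltac rconst_ring :=
  repeat (rewrite rconst_sub || rewrite rconst_add || rewrite rconst_mul
          || rewrite rconst_opp || rewrite rconst_2 || rewrite rconst_1 || rewrite rconst_0);
  ring.

Lemma D_split x r : self_adjoint x -> 0 < r ->
  le top (join (D (add x (opp (rconst r)))) (D (add (rconst (2 * r)) (opp x)))).
Proof.
  intros Hx Hr. rewrite <- (D_const_pos r) by auto.
  replace (@rconst A r) with
    (add (add x (opp (rconst r))) (add (rconst (2 * r)) (opp x))) at 1 by rconst_ring.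
  apply D_add; auto with sa.
Qed.

(* With [x <= N] and [2rN <= q]: [xy > q], [x > r], [y < 2r] are incompatible, as
   [(xy - q) + x (2r - y) + 2r (N - x) = 2rN - q <= 0]. *)
Lemma D_product_gap_left x y N r q : self_adjoint x -> self_adjoint y ->
  0 < r -> 2 * r * N <= q -> D (add (rconst N) (opp x)) = top ->
  le (meet (meet (D (add (mul x y) (opp (rconst q)))) (D (add x (opp (rconst r)))))
           (D (add (rconst (2 * r)) (opp y)))) bot.
Proof.
  intros Hx Hy Hr Hq HN.
  rewrite <- (D_const_nonpos (2 * r * N - q)) by lra.
  replace (@rconst A (2 * r * N - q)) with
    (add (add (mul x y) (opp (rconst q)))
       (add (mul x (add (rconst (2 * r)) (opp y))) (mul (rconst (2 * r)) (add (rconst N) (opp x)))))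
    by rconst_ring.
  apply le_D_add; auto 10 with sa; [eapply le_trans; apply meet_lb1|].
  apply le_D_add; auto 10 with sa; [apply le_D_mul; auto with sa|].
  - eapply le_trans; [apply meet_lb1|]. eapply le_trans; [apply meet_lb2|].
    rewrite <- rconst_opp. apply D_shift_down; auto. lra.
  - apply meet_lb2.
  - apply le_D_mul; auto with sa; apply le_D_top; auto. apply D_const_pos. lra.
Qed.

(* With [-N <= y <= N] and [2rN <= q]: [xy > q] and [-2r < x < 2r] are incompatible, as
   [2 (xy - q) + (2r - x)(N + y) + (2r + x)(N - y) = 4rN - 2q <= 0]. *)
Lemma D_product_gap_middle x y N r q : self_adjoint x -> self_adjoint y ->
  0 < r -> 2 * r * N <= q ->
  D (add (rconst N) (opp y)) = top -> D (add (rconst N) (opp (opp y))) = top ->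
  le (meet (meet (D (add (mul x y) (opp (rconst q)))) (D (add (rconst (2 * r)) (opp x))))
           (D (add (rconst (2 * r)) (opp (opp x))))) bot.
Proof.
  intros Hx Hy Hr Hq HN1 HN2.
  rewrite <- (D_const_nonpos (2 * (2 * r) * N - 2 * q)) by lra.
  replace (@rconst A (2 * (2 * r) * N - 2 * q)) with
    (add (mul (rconst 2) (add (mul x y) (opp (rconst q))))
       (add (mul (add (rconst (2 * r)) (opp x)) (add (rconst N) (opp (opp y))))
            (mul (add (rconst (2 * r)) (opp (opp x))) (add (rconst N) (opp y)))))
    by rconst_ring.
  apply le_D_add; auto 10 with sa; [|apply le_D_add; auto 10 with sa];
    apply le_D_mul; auto 10 with sa.
  - apply le_D_top, D_const_pos. lra.
  - eapply le_trans; apply meet_lb1.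
  - eapply le_trans; [apply meet_lb1|apply meet_lb2].
  - apply le_D_top; auto.
  - apply meet_lb2.
  - apply le_D_top; auto.
Qed.

Definition shift (a : A) (q : Q) : A := add a (opp (rconst (Q2R q))).

Lemma self_adjoint_shift a q : self_adjoint a -> self_adjoint (shift a q).
Proof. unfold shift; auto with sa. Qed.
Hint Resolve self_adjoint_shift : sa.

Lemma D_shift_antitone a q q' : self_adjoint a -> (q' <= q)%Q ->
  le (D (shift a q)) (D (shift a q')).
Proof.
  intros Ha H. apply Qle_Rle in H. unfold shift.
  replace (add a (opp (@rconst A (Q2R q)))) with
    (add (add a (opp (rconst (Q2R q')))) (rconst (Q2R q' - Q2R q))) by rconst_ring.
  apply D_shift_down; auto with sa. lra.
Qed.

Lemma D_shift_le a q : self_adjoint a -> (0 <= q)%Q -> le (D (shift a q)) (D a).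
Proof.
  intros Ha H. apply Qle_Rle in H. change (Q2R 0) with (0 * / 1) in H.
  unfold shift. rewrite <- rconst_opp. apply D_shift_down; auto. lra.
Qed.

Lemma D_shift_one : D (shift one (1 # 2)) = top.
Proof.
  unfold shift. rewrite <- rconst_1, <- rconst_sub. apply D_const_pos.
  unfold Q2R; simpl. lra.
Qed.

Lemma D_shift_disjoint a q q' : self_adjoint a -> (0 < q)%Q -> (0 < q')%Q ->
  le (meet (D (shift a q)) (D (shift (opp a) q'))) bot.
Proof.
  intros Ha H1 H2. apply Q2R_pos in H1. apply Q2R_pos in H2.
  rewrite <- (D_const_nonpos (- (Q2R q + Q2R q'))) by lra.
  replace (@rconst A (- (Q2R q + Q2R q'))) with (add (shift a q) (shift (opp a) q'))
    by (unfold shift; rconst_ring).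
  apply le_D_add; auto with sa; [apply meet_lb1|apply meet_lb2].
Qed.

Lemma D_shift_neg_square b q : self_adjoint b -> (0 < q)%Q ->
  D (shift (opp (mul b b)) q) = bot.
Proof.
  intros Hb Hq. apply le_bot_eq. rewrite <- (D_neg_square b Hb).
  apply D_shift_le; auto with sa. apply Qlt_le_weak; auto.
Qed.

Lemma shift_half a q : shift (shift a (q * (1 # 2))) (q * (1 # 2)) = shift a q.
Proof.
  unfold shift. rewrite Q2R_half.
  transitivity (add a (opp (@rconst A (Q2R q / 2 + Q2R q / 2)))); [rconst_ring|].
  do 3 f_equal. field.
Qed.

Lemma D_shift_add a b q : self_adjoint a -> self_adjoint b ->
  le (D (shift (add a b) q)) (join (D (shift a (q * (1 # 2)))) (D (shift b (q * (1 # 2))))).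
Proof.
  intros Ha Hb.
  replace (shift (add a b) q) with (add (shift a (q * (1 # 2))) (shift b (q * (1 # 2)))).
  - apply D_add; auto with sa.
  - rewrite <- (shift_half (add a b) q). unfold shift. ring.
Qed.

(* [a > r] and [b > r] give [ab > r^2]: [ab - r^2 = (a-r)(b-r) + r(a-r) + r(b-r)]. *)
Lemma D_shift_mul_ge a b r : self_adjoint a -> self_adjoint b -> (0 < r)%Q ->
  le (meet (D (shift a r)) (D (shift b r))) (D (shift (mul a b) (r * r))).
Proof.
  intros Ha Hb Hr. pose proof (Q2R_pos _ Hr) as Hr'.
  replace (shift (mul a b) (r * r)) with
    (add (add (mul (shift a r) (shift b r)) (mul (rconst (Q2R r)) (shift a r)))
         (mul (rconst (Q2R r)) (shift b r)))
    by (unfold shift; rewrite Q2R_mult; rconst_ring).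
  repeat apply le_D_add; auto 20 with sa; apply le_D_mul; auto 10 with sa;
    solve [apply meet_lb1 | apply meet_lb2 | apply le_D_top, D_const_pos; auto].
Qed.

Lemma D_shift_mul_le a b q : self_adjoint a -> self_adjoint b -> (0 < q)%Q ->
  exists r, (0 < r)%Q /\
  le (D (shift (mul a b) q))
     (join (meet (D (shift a r)) (D (shift b r)))
           (meet (D (shift (opp a) r)) (D (shift (opp b) r)))).
Proof.
  intros Ha Hb Hq.
  destruct (D_common_bound a b Ha Hb) as [N [HN [Ha1 [Ha2 [Hb1 Hb2]]]]].
  destruct (rational_below q (2 * N) Hq ltac:(lra)) as [r [Hr Hrq]].
  exists r. split; [exact Hr|].
  pose proof (Q2R_pos r Hr) as Hr'.
  assert (Hgap : 2 * Q2R r * N <= Q2R q) by lra.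
  unfold shift. set (z := D (add (mul a b) (opp (rconst (Q2R q))))).
  apply (le_by_cases _ _ _ _ _ (D_split a (Q2R r) Ha Hr')).
  - apply (le_by_cases _ _ _ _ _ (D_split b (Q2R r) Hb Hr')).
    + eapply le_trans; [|apply join_ub1]. apply meet_mono; [apply meet_lb2|apply le_refl].
    + eapply le_trans; [apply (D_product_gap_left a b N); auto|apply bot_min].
  - apply (le_by_cases _ _ _ _ _ (D_split (opp a) (Q2R r) ltac:(auto with sa) Hr')).
    + apply (le_by_cases _ _ _ _ _ (D_split (opp b) (Q2R r) ltac:(auto with sa) Hr')).
      * eapply le_trans; [|apply join_ub2]. apply meet_mono; [apply meet_lb2|apply le_refl].
      * eapply le_trans; [|apply bot_min].
        eapply le_trans; [|apply (D_product_gap_left (opp a) (opp b) N (Q2R r) (Q2R q)); auto with sa].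
        apply meet_mono; [apply meet_mono; [|apply le_refl]|apply le_refl].
        eapply le_trans; [apply meet_lb1|]. unfold z.
        replace (mul (opp a) (opp b)) with (mul a b) by ring. apply le_refl.
    + eapply le_trans; [apply (D_product_gap_middle a b N); auto|apply bot_min].
Qed.

Definition Eset (a : sa A) (x : L) : Prop :=
  exists q, (0 < q)%Q /\ le x (D (shift (proj1_sig a) q)).

Lemma Eset_ideal a : is_ideal L (Eset a).
Proof.
  pose proof (proj2_sig a) as Ha. split; [|split].
  - intros x y H [q [Hq Hx]]. exists q. split; auto. eapply le_trans; eauto.
  - exists 1%Q. split; [reflexivity|apply bot_min].
  - intros x y [q [Hq Hx]] [q' [Hq' Hy]].
    destruct (Qlt_le_dec q q') as [H|H].
    + exists q. split; auto. apply join_leI; auto. eapply le_trans; [apply Hy|].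
      apply D_shift_antitone; auto. apply Qlt_le_weak; auto.
    + exists q'. split; auto. apply join_leI; auto. eapply le_trans; [apply Hx|].
      apply D_shift_antitone; auto.
Qed.

Definition Eidl (a : sa A) : Idl L := exist _ _ (Eset_ideal a).

Lemma Eidl_below a x : ival L (Eidl a) x -> le x (DL a).
Proof.
  intros [q [Hq Hx]]. rewrite DL_D. eapply le_trans; [apply Hx|].
  apply D_shift_le; [apply (proj2_sig a)|apply Qlt_le_weak; auto].
Qed.

Lemma DL_shift_in_Eidl a q : (0 < q)%Q -> ival L (Eidl a) (DL (sa_subq a q)).
Proof. intros Hq. exists q. split; auto. rewrite DL_D. apply le_refl. Qed.

Lemma Eset_common a b x : Eset a x -> Eset b x ->
  exists r, (0 < r)%Q /\ le x (meet (D (shift (proj1_sig a) r)) (D (shift (proj1_sig b) r))).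
Proof.
  intros [q1 [H1 E1]] [q2 [H2 E2]].
  destruct (Qlt_le_dec q1 q2) as [H|H].
  - exists q1. split; auto. apply le_meetI; auto. eapply le_trans; [apply E2|].
    apply D_shift_antitone; [apply (proj2_sig b)|apply Qlt_le_weak; auto].
  - exists q2. split; auto. apply le_meetI; auto. eapply le_trans; [apply E1|].
    apply D_shift_antitone; [apply (proj2_sig a)|auto].
Qed.

Lemma Eidl_mul_le a b :
  Ile L (Eidl (sa_mul a b))
    (fjoin (F := IFrame L) (Imeet L (Eidl a) (Eidl b))
           (Imeet L (Eidl (sa_opp a)) (Eidl (sa_opp b)))).
Proof.
  intros x [q [Hq Hx]].
  destruct (D_shift_mul_le (proj1_sig a) (proj1_sig b) q (proj2_sig a) (proj2_sig b) Hq)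
    as [r [Hr Hle]].
  eapply in_fjoin; [| |eapply le_trans; [apply Hx|apply Hle]];
    split; exists r; split; auto; [apply meet_lb1|apply meet_lb2|apply meet_lb1|apply meet_lb2].
Qed.

Lemma Eidl_mul_ge a b :
  Ile L (fjoin (F := IFrame L) (Imeet L (Eidl a) (Eidl b))
                (Imeet L (Eidl (sa_opp a)) (Eidl (sa_opp b))))
    (Eidl (sa_mul a b)).
Proof.
  pose proof (proj2_sig a) as Ha. pose proof (proj2_sig b) as Hb.
  intros x [l [Hl Hx]]. eapply idl_down; [apply Hx|]. apply idl_bigjoin. intros y Hy.
  destruct (Hl y Hy) as [I [[-> | ->] [Hya Hyb]]];
    destruct (Eset_common _ _ y Hya Hyb) as [r [Hr Hyr]];
    exists (r * r)%Q; split; try (apply Qmult_lt_0_compat; auto);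
    eapply le_trans; try apply Hyr.
  - apply D_shift_mul_ge; auto.
  - simpl. replace (mul (proj1_sig a) (proj1_sig b))
      with (mul (opp (proj1_sig a)) (opp (proj1_sig b))) by ring.
    apply D_shift_mul_ge; auto with sa.
Qed.

Lemma Eidl_relations : OA_relations (IFrame L) Eidl.
Proof.
  split; [|split; [|split; [|split; [|split]]]].
  - apply Idl_ext. intros x. unfold Eidl, ival; simpl. split; auto. intros _.
    exists (1 # 2)%Q. split; [reflexivity|]. apply le_D_top, D_shift_one.
  - intros a. apply eq_fbot. intros x [Hxa Hxa'].
    destruct (Eset_common _ _ x Hxa Hxa') as [r [Hr Hxr]].
    eapply le_trans; [apply Hxr|]. apply D_shift_disjoint; auto. apply (proj2_sig a).
  - intros b. apply eq_fbot. intros x [q [Hq Hx]]. simpl in Hx.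
    rewrite D_shift_neg_square in Hx; auto. apply (proj2_sig b).
  - intros a b x [q [Hq Hx]].
    pose proof (Q_half_pos q Hq) as Hq2.
    eapply in_fjoin; [exists (q * (1 # 2))%Q; split; [auto|apply le_refl]
                     |exists (q * (1 # 2))%Q; split; [auto|apply le_refl]|].
    eapply le_trans; [apply Hx|]. apply D_shift_add; [apply (proj2_sig a)|apply (proj2_sig b)].
  - intros a b. apply Ile_antisym; [apply Eidl_mul_le|apply Eidl_mul_ge].
  - intros a x [q [Hq Hx]]. pose proof (Q_half_pos q Hq) as Hq2.
    apply (proj1 (fsup_lub (IFrame L) _ _) (fle_refl _ _) (Eidl (sa_subq a (q * (1 # 2))))).
    + exists (q * (1 # 2))%Q. split; auto.
    + exists (q * (1 # 2))%Q. split; auto.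
      change (proj1_sig (sa_subq a (q * (1 # 2)))) with (shift (proj1_sig a) (q * (1 # 2))).
      rewrite shift_half. auto.
Qed.
End Relations.

Section CoverByMap.
Variables (L : DLattice) (O : Frame) (f : L -> O).
Hypothesis Hf : dlat_frame_hom f.
Variable cov : L -> (L -> Prop) -> Prop.
Hypothesis Hcov : forall x U, cov x U <-> fle (f x) (fsup (image f U)).

Lemma cover_is_covering : is_covering cov.
Proof.
  split; [|split; [|split]].
  - intros x U Ux. apply Hcov, fle_sup. exists x. auto.
  - intros x U V HU HV. apply Hcov. apply Hcov in HU. eapply fle_trans; [apply HU|].
    apply fsup_le. intros y [z [Uz ->]]. apply Hcov. auto.
  - intros x y U HU. apply Hcov. apply Hcov in HU. rewrite (proj1 Hf).
    eapply fle_trans; [apply fmeet_lb1|]. auto.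
  - intros x U V HU HV. apply Hcov. apply Hcov in HU. apply Hcov in HV.
    eapply fle_trans; [|apply (meet_image_sups f Hf)]. apply fle_meetI; auto.
Qed.

Definition opens_below (u : O) : L -> Prop := fun x => fle (f x) u.

Lemma opens_below_formal u : in_F cov (opens_below u).
Proof.
  split.
  - intros x y Hyx Hx. eapply fle_trans; [apply (dfhom_mono f Hf), Hyx|exact Hx].
  - intros x Hx. apply Hcov in Hx. eapply fle_trans; [apply Hx|].
    apply fsup_le. intros y [z [Hz ->]]. exact Hz.
Qed.

Lemma formal_open_recovered U : in_F cov U -> forall x, opens_below (fsup (image f U)) x <-> U x.
Proof.
  intros [_ Hclosed] x. split.
  - intros Hx. apply Hclosed, Hcov, Hx.
  - intros Ux. apply fle_sup. exists x. auto.
Qed.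

Lemma opens_below_image y x : opens_below (f y) x <-> F_image cov (downset y) x.
Proof.
  split.
  - intros Hx V [_ Hclosed] Hy. apply Hclosed, Hcov.
    eapply fle_trans; [apply Hx|]. apply fle_sup. exists y. split; [|reflexivity].
    apply Hy, le_refl.
  - intros Hx. apply Hx; [apply opens_below_formal|].
    intros z Hz. apply (dfhom_mono f Hf), Hz.
Qed.

Lemma formal_opens_iso :
  (forall u, fsup (image f (opens_below u)) = u) ->
  exists (phi : O -> (L -> Prop)) (psi : (L -> Prop) -> O),
    (forall u, in_F cov (phi u)) /\
    (forall u v, fle u v <-> (forall x, phi u x -> phi v x)) /\
    (forall u, psi (phi u) = u) /\
    (forall U, in_F cov U -> forall x, phi (psi U) x <-> U x) /\
    (forall y x, phi (f y) x <-> F_image cov (downset y) x).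
Proof.
  intros Hgen. exists opens_below, (fun U => fsup (image f U)).
  split; [|split; [|split; [|split]]].
  - apply opens_below_formal.
  - intros u v. split.
    + intros Huv x Hx. eapply fle_trans; eauto.
    + intros Hincl. rewrite <- (Hgen u), <- (Hgen v). apply fsup_mono.
      intros y [x [Hx ->]]. exists (f x). split; [exists x; auto|apply fle_refl].
  - exact Hgen.
  - apply formal_open_recovered.
  - apply opens_below_image.
Qed.
End CoverByMap.

Section Spectrum.
Variables (A : CommCStarAlg) (L : DLattice) (DL : sa A -> L).
Hypothesis HL : is_LA L DL.
Variables (O : Frame) (DO : sa A -> O).
Hypothesis HO : is_OA O DO.
Variable f : L -> O.
Hypothesis Hf : dlat_frame_hom f.
Hypothesis HfD : forall a, f (DL a) = DO a.

Lemma DO_approx a : fle (DO a) (fsup (fun y => exists r : Q, (0 < r)%Q /\ y = DO (sa_subq a r))).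
Proof. apply (proj1 HO). Qed.

Lemma ideal_sup_Eidl a : ideal_sup L f (Eidl A L DL (proj1 HL) a) = DO a.
Proof.
  apply fle_antisym.
  - apply fsup_le. intros y [x [Hx ->]]. rewrite <- HfD.
    apply (dfhom_mono f Hf). apply (Eidl_below A L DL (proj1 HL) a x Hx).
  - eapply fle_trans; [apply DO_approx|].
    apply fsup_le. intros y [r [Hr ->]]. rewrite <- HfD. apply fle_sup.
    exists (DL (sa_subq a r)). split; [|reflexivity].
    apply DL_shift_in_Eidl; auto.
Qed.

Variable h : O -> IFrame L.
Hypothesis Hh : frame_hom h.
Hypothesis HhD : forall a, h (DO a) = Eidl A L DL (proj1 HL) a.

(* [ideal_sup f o h] and the identity are frame maps fixing the generators of [O]. *)
Lemma ideal_sup_retraction u : ideal_sup L f (h u) = u.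
Proof.
  destruct HO as [HOR HOU]. destruct (HOU O DO HOR) as [h0 [_ [_ Huniq]]].
  rewrite (Huniq (fun u => ideal_sup L f (h u))), (Huniq (fun u => u)); auto.
  - split; [|split]; auto. intros S. f_equal.
    apply functional_extensionality; intros y; apply propositional_extensionality.
    split; [intros Sy; exists y; auto|intros [x [Sx ->]]; auto].
  - destruct Hh as [H1 [H2 H3]]. destruct (ideal_sup_hom L f Hf) as [K1 [K2 K3]].
    split; [|split].
    + intros x y. rewrite H1, K1. reflexivity.
    + rewrite H2, K2. reflexivity.
    + intros S. rewrite H3, K3. f_equal.
      apply functional_extensionality; intros y; apply propositional_extensionality.
      split.
      * intros [I [[x [Sx ->]] ->]]. exists x. auto.
      * intros [x [Sx ->]]. exists (h x). split; auto. exists x; auto.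
  - intros a. rewrite HhD. apply ideal_sup_Eidl.
Qed.

Lemma opens_generated u : fsup (image f (opens_below L O f u)) = u.
Proof.
  apply fle_antisym.
  - apply fsup_le. intros y [x [Hx ->]]. exact Hx.
  - rewrite <- (ideal_sup_retraction u) at 1. apply fsup_le. intros y [x [Hx ->]].
    apply fle_sup. exists x. split; [|reflexivity].
    unfold opens_below. rewrite <- (ideal_sup_retraction u). apply fle_sup. exists x. auto.
Qed.

Lemma h_f_below x y : ival L (h (f x)) y -> le y x.
Proof.
  destruct Hf as [Hfm [Hfj [_ Hfb]]]. destruct Hh as [Hhm [_ Hhs]].
  revert y. apply (LA_ind A L DL HL (fun x => forall y, ival L (h (f x)) y -> le y x)).
  - intros x1 x2 P1 P2 z. rewrite Hfm, Hhm. intros [H1 H2]. apply le_meetI; auto.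
  - intros x1 x2 P1 P2 z. rewrite Hfj. unfold fjoin. rewrite Hhs.
    intros [l [Hl Hz]]. eapply le_trans; [apply Hz|]. apply bigjoin_le. intros w Hw.
    destruct (Hl w Hw) as [I [[t [[-> | ->] ->]] It]].
    + eapply le_trans; [apply P1; auto|apply join_ub1].
    + eapply le_trans; [apply P2; auto|apply join_ub2].
  - intros; apply top_max.
  - intros z. rewrite Hfb. unfold fbot. rewrite Hhs.
    intros [l [Hl Hz]]. eapply le_trans; [apply Hz|]. apply bigjoin_le. intros w Hw.
    destruct (Hl w Hw) as [I [[t [[] _]] _]].
  - intros a z. rewrite HfD, HhD. apply Eidl_below.
Qed.

Lemma generator_cover_char (a : sa A) (U : L -> Prop) :
  fle (f (DL a)) (fsup (image f U)) <->
  (forall q : Q, (0 < q)%Q ->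
     exists U0 : list L, (forall u, In u U0 -> U u) /\ le (DL (sa_subq a q)) (bigjoin U0)).
Proof.
  split.
  - intros Hcover q Hq.
    assert (Hin : ival L (h (f (DL a))) (DL (sa_subq a q))).
    { rewrite HfD, HhD. apply DL_shift_in_Eidl; auto. }
    apply (frame_hom_mono h Hh) in Hcover. apply Hcover in Hin.
    rewrite (proj2 (proj2 Hh)) in Hin. destruct Hin as [l [Hl Hle]].
    destruct (bigjoin_refine L U l) as [U0 [HU0 HlU0]].
    { intros y Hy. destruct (Hl y Hy) as [I [[t [[u [Uu ->]] ->]] It]].
      exists u. split; auto. apply (h_f_below u y It). }
    exists U0. split; auto. eapply le_trans; eauto.
  - intros Hfinite. rewrite HfD. eapply fle_trans; [apply DO_approx|].
    apply fsup_le. intros y [r [Hr ->]]. destruct (Hfinite r Hr) as [U0 [HU0 Hle]].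
    rewrite <- HfD. eapply fle_trans; [apply (dfhom_mono f Hf), Hle|].
    apply dfhom_bigjoin; auto. intros u Hu. apply fle_sup. exists u. auto.
Qed.
End Spectrum.

Theorem theorem3 (A : CommCStarAlg)
    (L : DLattice) (DL : sa A -> L) (HL : is_LA L DL)
    (O : Frame) (DO : sa A -> O) (HO : is_OA O DO)
    (f : L -> O) (Hf : dlat_frame_hom f) (HfD : forall a, f (DL a) = DO a)
    (cov : L -> (L -> Prop) -> Prop)
    (Hcov : forall x U, cov x U <-> fle (f x) (fsup (image f U))) :
  (* (a) *)
  (is_covering cov /\
   exists (phi : O -> (L -> Prop)) (psi : (L -> Prop) -> O),
     (forall u, in_F cov (phi u)) /\
     (forall u v, fle u v <-> (forall x, phi u x -> phi v x)) /\
     (forall u, psi (phi u) = u) /\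
     (forall U, in_F cov U -> forall x, phi (psi U) x <-> U x) /\
     (forall a x, phi (DO a) x <-> F_image cov (downset (DL a)) x))
  /\
  (* (b) *)
  (forall (a : sa A) (U : L -> Prop),
     cov (DL a) U <->
     (forall q : Q, (0 < q)%Q ->
        exists U0 : list L, (forall u, In u U0 -> U u) /\
                            le (DL (sa_subq a q)) (bigjoin U0))).
Proof.
  destruct (proj2 HO (IFrame L) (Eidl A L DL (proj1 HL)) (Eidl_relations A L DL (proj1 HL)))
    as [h [Hh [HhD _]]].
  split; [split|].
  - exact (cover_is_covering L O f Hf cov Hcov).
  - destruct (formal_opens_iso L O f Hf cov Hcov
                (opens_generated A L DL HL O DO HO f Hf HfD h Hh HhD))
      as [phi [psi [H1 [H2 [H3 [H4 H5]]]]]].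
    exists phi, psi. do 4 (split; [assumption|]).
    intros a x. rewrite <- HfD. apply H5.
  - intros a U. rewrite Hcov.
    exact (generator_cover_char A L DL HL O DO HO f Hf HfD h Hh HhD a U).
Qed.
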